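(* Let $k\ge 2$ and $l=2^{k-1}$. Then: (a),(b) the sequence $(d_n(k))_{n\ge k+1}$ is periodic with least period exactly $l$, i.e. $d_{n+l}(k)=d_n(k)$ for all $n\ge k+1$ and no smaller positive integer has this property; (c) $d_{n+l/2}(k)-d_n(k)\in\{5,-5\}$ for all $n\ge k+1$; (d) for each digit $j\in\{0,\dots,9\}$, the number of indices $i\in\{k+1,k+2,\dots,k+l\}$ with $d_i(k)=j$ equals the $j$-th component of the vector $A^{k-1}u\in\mathbb{Z}^{10}$, where components are indexed $0,\dots,9$, $A$ is the $10\times10$ matrix with rows and columns indexed by $0,\dots,9$ given by $A_{ij}=1$ if $\lfloor j/2\rfloor\equiv i\pmod 5$ and $A_{ij}=0$ otherwise (so row $i$ has ones exactly in columns $2(i\bmod 5)$ and $2(i\bmod 5)+1$), and $u$ is the vector whose component $2$ equals $1$ and all other components equal $0$.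
   Context: For integers $n\ge0$ and $k\ge0$, $d_n(k)\in\{0,\dots,9\}$ denotes the $k$-th decimal digit of $5^n$ counted from the right starting at $k=0$, i.e. $5^n=\sum_{k\ge0} d_n(k)10^k$ (with $d_n(k)=0$ for $k$ beyond the length of $5^n$). *)

From mathcomp Require Import all_boot all_order all_algebra.
Set Implicit Arguments. Unset Strict Implicit. Unset Printing Implicit Defensive.
Import GRing.Theory Num.Theory.

Definition digit5 (n k : nat) : nat := (5 ^ n %/ 10 ^ k) %% 10.

Definition Amat : 'M[int]_10 :=
  \matrix_(i < 10, j < 10) (if ((j %/ 2) == (i %% 5))%N then 1%R else 0%R).

Definition uvec : 'cV[int]_10 :=
  \col_(i < 10) (if ((i : nat) == 2)%N then 1%R else 0%R).

(* Write 5^(2^K) = 1 + 2^(K+2) t with t odd.  For n >= K+3, 5^n 5^(2^K) exceeds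
   5^n by an odd multiple of 5 * 10^(K+2), so shifting n by 2^K adds 5 (mod 10)
   to d_n(K+2).  Two such shifts give the period 2^(K+1); a smaller period p
   would make gcd(p, 2^(K+1)), a divisor of 2^K, a period too, contradicting the
   half shift.  For the distribution, d_(n+1)(k+1) = floor(d_n(k) / 2) (mod 5),
   and the half shift pairs the indices of the level-(k+1) window carrying
   digit j with those carrying j + 5 (mod 10); so the count of j at level k+1 is
   the count of the digits 2(j mod 5) and 2(j mod 5) + 1 at level k, which is
   one multiplication by A. *)
From mathcomp Require Import all_boot all_order all_algebra zify.

Set Implicit Arguments.
Unset Strict Implicit.
Unset Printing Implicit Defensive.

Import GRing.Theory Num.Theory.

Definition periodic_from (T : Type) (f : nat -> T) (N p : nat) :=
  forall n, N <= n -> f (n + p) = f n.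

Section PeriodicFrom.

Variables (T : Type) (f : nat -> T) (N : nat).

Lemma periodic_fromM p q : periodic_from f N p -> periodic_from f N (q * p).
Proof.
move=> per_p; elim: q => [|q IHq] n le_Nn; first by rewrite addn0.
by rewrite mulSnr addnA per_p ?IHq // (leq_trans le_Nn) ?leq_addr.
Qed.

Lemma periodic_from_dvd p m :
  periodic_from f N p -> p %| m -> periodic_from f N m.
Proof. by move=> per_p /dvdnP[c ->]; apply: periodic_fromM. Qed.

Lemma periodic_from_gcd p q : 0 < q ->
  periodic_from f N p -> periodic_from f N q -> periodic_from f N (gcdn q p).
Proof.
move=> q_gt0 per_p per_q n le_Nn.
have [a _ /dvdnP[c def_c]] := Bezoutl p q_gt0.
rewrite -(periodic_fromM a per_p) ?(leq_trans le_Nn) ?leq_addr //.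
by rewrite -addnA def_c (periodic_fromM c per_q).
Qed.

End PeriodicFrom.

Lemma exp5_pow2 K : exists2 t, odd t & 5 ^ 2 ^ K = 1 + 2 ^ K.+2 * t.
Proof.
elim: K => [|K [t odd_t def_t]]; first by exists 1.
exists (t + 2 ^ K.+1 * t * t); first by rewrite oddD odd_t expnS !oddM.
rewrite expnS mulnC expnM def_t -mulnn !expnS.
move: (2 ^ K) => x; nia.
Qed.

Lemma digit5_shift_half K n : K.+3 <= n ->
  digit5 (n + 2 ^ K) K.+2 = (digit5 n K.+2 + 5) %% 10.
Proof.
move=> le_n; have [t odd_t def_t] := exp5_pow2 K.
set c := 5 * (5 ^ (n - K.+3) * t).
have def_5n : 5 ^ (n + 2 ^ K) = 5 ^ n + c * 10 ^ K.+2.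
  rewrite expnD def_t /c -[10]/(2 * 5) expnMn -{1 2}(subnK le_n) expnD.
  rewrite (expnS 5 K.+2); nia.
have c_mod10 : c %% 10 = 5.
  by rewrite /c -[10]/(5 * 2) -muln_modr modn2 oddM oddX odd_t orbT.
by rewrite /digit5 def_5n divnDMl ?expn_gt0 // -modnDmr c_mod10 modnDml.
Qed.

Lemma digit5_period K : periodic_from (digit5^~ K.+2) K.+3 (2 ^ K.+1).
Proof.
move=> n le_n; rewrite /= expnS mul2n -addnn addnA.
rewrite !digit5_shift_half ?(leq_trans le_n) ?leq_addr //.
have : digit5 n K.+2 < 10 by rewrite ltn_pmod.
lia.
Qed.

Lemma digit5_period_min K p : 0 < p ->
  periodic_from (digit5^~ K.+2) K.+3 p -> 2 ^ K.+1 <= p.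
Proof.
move=> p_gt0 per_p; rewrite leqNgt; apply/negP => lt_p.
set g := gcdn (2 ^ K.+1) p.
have per_g : periodic_from (digit5^~ K.+2) K.+3 g.
  by apply: periodic_from_gcd _ per_p (@digit5_period K); rewrite expn_gt0.
have g_dvd : g %| 2 ^ K.
  have [m le_m def_g] := dvdn_pfactor g K.+1 (isT : prime 2) (dvdn_gcdl _ _).
  rewrite def_g dvdn_exp2l // -ltnS -(ltn_exp2l _ _ (isT : 1 < 2)) -def_g.
  by rewrite (leq_ltn_trans _ lt_p) // dvdn_leq // dvdn_gcdr.
have := periodic_from_dvd per_g g_dvd (leqnn K.+3).
rewrite /= digit5_shift_half //.
have : digit5 K.+3 K.+2 < 10 by rewrite ltn_pmod.
lia.
Qed.

Lemma digit5_shift_half_diff K n : K.+3 <= n ->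
  (Posz (digit5 (n + 2 ^ K) K.+2) - Posz (digit5 n K.+2) = 5 \/
   Posz (digit5 (n + 2 ^ K) K.+2) - Posz (digit5 n K.+2) = -5)%R.
Proof.
move=> le_n; rewrite digit5_shift_half //.
have : digit5 n K.+2 < 10 by rewrite ltn_pmod.
lia.
Qed.

Lemma count_add (T : eqType) (a b c : pred T) s :
  (forall x, x \in s -> a x + b x = c x) -> count a s + count b s = count c s.
Proof.
elim: s => [|x s IHs] //= abc.
rewrite -(abc x) ?mem_head // -IHs => [|y s_y]; first lia.
by rewrite abc // inE s_y orbT.
Qed.

Lemma count_iota_halves (a c : pred nat) m h :
  (forall i, i \in iota m h -> a i + a (i + h) = c i) ->
  count a (iota m (h + h)) = count c (iota m h).
Proof.
move=> ac; rewrite iotaD count_cat [m + h]addnC iotaDl count_map.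
by apply: count_add => i /ac <-; rewrite /= [h + i]addnC.
Qed.

Lemma digit5_succ_mod5 n k : digit5 n.+1 k.+1 %% 5 = digit5 n k %/ 2.
Proof.
rewrite /digit5 !expnS -[10 * _]/(5 * 2 * 10 ^ k) -mulnA divnMl // mulnC divnMA.
move: (5 ^ n %/ 10 ^ k) => q; rewrite modn_dvdm //; lia.
Qed.

Definition digit_count k j := count (fun i => digit5 i k == j) (iota k.+1 (2 ^ k.-1)).

Lemma digit_count_step K j : j < 10 ->
  digit_count K.+2 j =
  digit_count K.+1 (2 * (j %% 5)) + digit_count K.+1 (2 * (j %% 5)).+1.
Proof.
move=> lt_j; rewrite /digit_count /= expnS mul2n -addnn.
rewrite (@count_iota_halves _ (fun i => digit5 i K.+2 %% 5 == j %% 5)); last first.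
  move=> i; rewrite mem_iota => /andP[le_i _] /=; rewrite digit5_shift_half //.
  have : digit5 i K.+2 < 10 by rewrite ltn_pmod.
  by case: eqP; case: eqP; case: eqP => /=; lia.
rewrite -[K.+3]add1n iotaDl count_map.
rewrite (@eq_in_count _ _ (fun i => digit5 i K.+1 %/ 2 == j %% 5)); last first.
  by move=> i _ /=; rewrite add1n digit5_succ_mod5.
apply/esym/count_add => i _ /=.
by case: eqP; case: eqP; case: eqP => /=; lia.
Qed.

Section DigitDistribution.

Local Open Scope ring_scope.

Lemma Amat_mulE (v : 'cV[int]_10) (j : 'I_10) :
  (Amat *m v) j ord0 =
  v (inord (2 * (j %% 5))) ord0 + v (inord (2 * (j %% 5)).+1) ord0.
Proof.
rewrite mxE !big_ord_recl big_ord0 !mxE.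
case: j => [[|[|[|[|[|[|[|[|[|[|//]]]]]]]]]] lt_j] /=.
all: rewrite ?mul1r ?mul0r ?add0r ?addr0.
all: by congr (v _ _ + v _ _); apply: val_inj; rewrite /= inordK.
Qed.

Lemma digit_count_Amat K (j : 'I_10) :
  Posz (digit_count K.+1 j) = (Amat ^+ K *m uvec) j ord0.
Proof.
elim: K j => [|K IHK] j.
  (* The level-1 window is {2}, and 5^2 = 25. *)
  by rewrite expr0 mul1mx mxE; case: j => [[|[|[|[|[|[|[|[|[|[|//]]]]]]]]]]].
have lt_2q : ((2 * (j %% 5)).+1 < 10)%N by lia.
rewrite exprS -mulmxA Amat_mulE -!IHK !inordK ?(ltnW lt_2q) //.
by rewrite digit_count_step // PoszD.
Qed.

End DigitDistribution.

Theorem theorem10p2 (k : nat) (hk : 2 <= k) :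
  let l := 2 ^ k.-1 in
  (forall n, k.+1 <= n -> digit5 (n + l) k = digit5 n k) /\
  (forall p, 0 < p -> (forall n, k.+1 <= n -> digit5 (n + p) k = digit5 n k) -> l <= p) /\
  (forall n, k.+1 <= n ->
     (Posz (digit5 (n + l %/ 2) k) - Posz (digit5 n k) = 5 \/
      Posz (digit5 (n + l %/ 2) k) - Posz (digit5 n k) = -5)%R) /\
  (forall j : 'I_10,
     Posz (count (fun i => digit5 i k == j) (iota k.+1 l)) =
     ((Amat ^+ k.-1 *m uvec) j ord0)%R).
Proof.
case: k hk => [|[|K]] // _ l.
have half_l : (l %/ 2 = 2 ^ K)%N by rewrite /l /= expnS mulKn.
split; first exact: digit5_period.
split; first exact: digit5_period_min.
split; first by move=> n le_n; rewrite half_l; apply: digit5_shift_half_diff.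
exact: digit_count_Amat.
Qed.
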